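(* Let $\mathcal X$, $\mathcal Y$, $\mathcal Z$ be finite sets ($\mathcal Y$ the set of collections of intermediate outputs, $\mathcal Z$ the set of final outputs), let $\mathcal S=\mathcal Y\times\mathcal Z$, and write $s=(y,z)\in\mathcal S$. Let $r^*:\mathcal X\times\mathcal Z\to\mathbb R$, $\beta>0$, and let $\mathbb P(z\succ z'\mid x)=\frac{e^{r^*(x,z)}}{e^{r^*(x,z)}+e^{r^*(x,z')}}$ be the Bradley–Terry preference oracle on final outputs. Define the system preference oracle $\mathbb P_{\mathrm{sys}}(s^w\succ s^l\mid x):=\mathbb P(z^w\succ z^l\mid x)$ for $s^w=(y^w,z^w)$, $s^l=(y^l,z^l)$. Let the compound system be a family $\{p_\theta(\cdot\mid x):\theta\in\Theta\}$ of joint conditional distributions on $\mathcal S$, and assume this family contains every conditional distribution on $\mathcal S$ that is strictly positive. Let the reference $p_{\bar\theta}(\cdot\mid x)$ be uniform on $\mathcal S$ for every $x$. Let $\mathcal D$ be the preference distribution obtained by drawing $(x,s,s')$ from a distribution $\mathcal D'$ on $\mathcal X\times\mathcal S\times\mathcal S$ that gives positive probability to every triple (in particular every $s\in\mathcal Y\times\mathcal Z$ is sampled with positive probability), and setting $(s^w,s^l)=(s,s')$ with probability $\mathbb P_{\mathrm{sys}}(s\succ s'\mid x)$ and $(s^w,s^l)=(s',s)$ otherwise. Suppose $\theta^*_{\mathrm{sys}}\in\Theta$ minimizes the SysDPO loss $$L_{\mathrm{Direct}}(\theta)=-\mathbb E_{(x,s^w,s^l)\sim\mathcal D}\Big[\log\sigma\Big(\beta\log\tfrac{p_\theta(s^w\mid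 x)}{p_{\bar\theta}(s^w\mid x)}-\beta\log\tfrac{p_\theta(s^l\mid x)}{p_{\bar\theta}(s^l\mid x)}\Big)\Big],$$ with $\sigma$ the sigmoid. Then the marginal model on final outputs, $p_{\theta^*_{\mathrm{sys}}}(z\mid x)=\sum_{y\in\mathcal Y}p_{\theta^*_{\mathrm{sys}}}(y,z\mid x)$, is $\beta$-perfectly aligned with $\mathbb P$, i.e. for all $x\in\mathcal X$ and $z^w,z^l\in\mathcal Z$, $$\mathbb P(z^w\succ z^l\mid x)=\frac{p_{\theta^*_{\mathrm{sys}}}(z^w\mid x)^\beta}{p_{\theta^*_{\mathrm{sys}}}(z^w\mid x)^\beta+p_{\theta^*_{\mathrm{sys}}}(z^l\mid x)^\beta}.$$
   Context: A generative model $\theta^*$ with conditional distribution $p_{\theta^*}(\cdot\mid x)$ on $\mathcal Z$ is called $\beta$-perfectly aligned (for $\beta>0$) with a preference oracle $\mathbb P(\cdot\succ\cdot\mid x)$ if for all $x\in\mathcal X$ and $z^w,z^l\in\mathcal Z$, $\frac{\mathbb P(z^w\succ z^l\mid x)}{\mathbb P(z^l\succ z^w\mid x)}=\Big(\frac{p_{\theta^*}(z^w\mid x)}{p_{\theta^*}(z^l\mid x)}\Big)^\beta$, equivalently $\mathbb P(z^w\succ z^l\mid x)=\frac{p_{\theta^*}(z^w\mid x)^\beta}{p_{\theta^*}(z^w\mid x)^\beta+p_{\theta^*}(z^l\mid x)^\beta}$. *)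

From HB Require Import structures.
From mathcomp Require Import all_boot all_order all_algebra.
From mathcomp Require Import all_classical all_reals all_analysis.
Set Implicit Arguments. Unset Strict Implicit. Unset Printing Implicit Defensive.
Import Order.TTheory GRing.Theory Num.Theory.
Local Open Scope ring_scope.

Section SysDPO.
Variables (R : realType) (X Y Z : finType).

Definition BT (rstar : X -> Z -> R) (x : X) (z z' : Z) : R :=
  expR (rstar x z) / (expR (rstar x z) + expR (rstar x z')).

Definition Psys (rstar : X -> Z -> R) (x : X) (s s' : Y * Z) : R :=
  BT rstar x s.2 s'.2.

Definition sigmoid (t : R) : R := 1 / (1 + expR (- t)).

Definition unif_ref (x : X) (s : Y * Z) : R := (#|{: Y * Z}|%:R)^-1.

Definition is_cond_distr (q : X -> Y * Z -> R) : Prop :=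
  (forall x s, 0 <= q x s) /\ (forall x, \sum_(s : Y * Z) q x s = 1).

(* SysDPO loss, as an expectation over D (induced by D' and Psys).
   If the model assigns probability 0 to some s, the loss is +oo
   (log 0 = -oo convention; every s is sampled as winner with positive
   probability). *)
Definition sysdpo_loss (rstar : X -> Z -> R) (beta : R)
    (D' : X -> Y * Z -> Y * Z -> R) (q : X -> Y * Z -> R) : \bar R :=
  if `[< forall x s, 0 < q x s >] then
    let h x s := beta * ln (q x s / unif_ref x s) in
    (- \sum_(x : X) \sum_(s : Y * Z) \sum_(s' : Y * Z)
        D' x s s' * (Psys rstar x s s' * ln (sigmoid (h x s - h x s'))
                   + (1 - Psys rstar x s s') * ln (sigmoid (h x s' - h x s))))%:E
  else +oo%E.

Definition marginalZ (q : X -> Y * Z -> R) (x : X) (z : Z) : R :=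
  \sum_(y : Y) q x (y, z).

End SysDPO.

(* The SysDPO loss is a D'-weighted sum, over triples (x, s, s'), of the
   expected log-likelihood of a Bernoulli(sigmoid d) label under the true
   label Bernoulli(Psys), where d is the difference of the implicit rewards
   beta * ln (q / uniform) of s and s'.  By Gibbs' inequality each summand is
   maximised exactly when sigmoid d = Psys, i.e. d = r*(x,z) - r*(x,z'); the
   Gibbs policy exp (r* / beta) / normaliser attains this simultaneously for
   all triples and is strictly positive, hence lies in the model family.  A
   minimiser must therefore match it on every triple (all D'-weights are
   positive), which forces p(y, z | x) to be proportional to exp (r*(x,z)/beta)
   independently of y.  Summing over y keeps this form, and raising to the
   power beta turns the marginal ratio back into the Bradley--Terry ratio. *)
From HB Require Import structures.
From mathcomp Require Import all_boot all_order all_algebra.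
From mathcomp Require Import all_classical all_reals all_analysis.
From mathcomp Require Import ring lra.
Import Order.TTheory GRing.Theory Num.Theory.
Set Implicit Arguments. Unset Strict Implicit.
Local Open Scope ring_scope.

Section Sigmoid.
Variable R : realType.
Implicit Types a b d : R.

Lemma sigmoid_gt0 d : 0 < sigmoid d.
Proof. by rewrite /sigmoid mul1r invr_gt0 ltr_pwDl ?expR_gt0. Qed.

Lemma sigmoidN d : sigmoid (- d) = 1 - sigmoid d.
Proof.
rewrite /sigmoid opprK expRN; have e0 := expR_gt0 d.
by field; rewrite !lt0r_neq0 // addr_gt0.
Qed.

Lemma sigmoid_lt1 d : sigmoid d < 1.
Proof. by have := sigmoid_gt0 (- d); rewrite sigmoidN subr_gt0. Qed.

Lemma sigmoidB a b : sigmoid (a - b) = expR a / (expR a + expR b).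
Proof.
rewrite /sigmoid opprB expRB; have ea := expR_gt0 a; have eb := expR_gt0 b.
by field; rewrite !lt0r_neq0 ?addr_gt0.
Qed.

Lemma sigmoid_inj : injective (@sigmoid R).
Proof.
move=> a b; rewrite /sigmoid !mul1r => /(congr1 GRing.inv); rewrite !invrK.
by move/addrI/expR_inj/oppr_inj.
Qed.

End Sigmoid.

Section Gibbs.
Variable R : realType.
Implicit Types a b P t : R.

Lemma mul_ln_div_le a b : 0 < a -> 0 < b -> a * ln (b / a) <= b - a.
Proof.
move=> a0 b0; have := expR_ge1Dx (ln (b / a)).
rewrite lnK ?posrE ?divr_gt0 // -(ler_pM2l a0) mulrDr mulr1 mulrCA divff ?lt0r_neq0 //.
by rewrite mulr1 -lerBrDl.
Qed.

Lemma mul_ln_div_lt a b : 0 < a -> 0 < b -> b != a -> a * ln (b / a) < b - a.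
Proof.
move=> a0 b0 ba; have : ln (b / a) != 0.
  by rewrite ln_eq0 ?divr_gt0 //; apply: contra ba => /eqP/divr1_eq ->.
move=> /expR_gt1Dx; rewrite lnK ?posrE ?divr_gt0 // -(ltr_pM2l a0) mulrDr mulr1.
by rewrite mulrCA divff ?lt0r_neq0 // mulr1 -ltrBrDl.
Qed.

Definition bernoulli_loglik P t := P * ln t + (1 - P) * ln (1 - t).

Lemma bernoulli_loglik_gap P t : 0 < P < 1 -> 0 < t < 1 ->
  bernoulli_loglik P t = bernoulli_loglik P P
    + (P * ln (t / P) + (1 - P) * ln ((1 - t) / (1 - P))).
Proof.
move=> /andP[P0 P1] /andP[t0 t1].
rewrite /bernoulli_loglik !ln_div ?posrE ?subr_gt0 //; ring.
Qed.

Lemma bernoulli_loglik_le P t : 0 < P < 1 -> 0 < t < 1 ->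
  bernoulli_loglik P t <= bernoulli_loglik P P.
Proof.
move=> hP ht; rewrite bernoulli_loglik_gap //.
case/andP: hP => P0 P1; case/andP: ht => t0 t1.
have := mul_ln_div_le P0 t0.
have := @mul_ln_div_le (1 - P) (1 - t); rewrite !subr_gt0 => /(_ P1 t1).
lra.
Qed.

Lemma bernoulli_loglik_eq P t : 0 < P < 1 -> 0 < t < 1 ->
  bernoulli_loglik P t = bernoulli_loglik P P -> t = P.
Proof.
move=> hP ht; rewrite bernoulli_loglik_gap // => gap0.
case: (eqVneq t P) => // tP; exfalso.
case/andP: hP => P0 P1; case/andP: ht => t0 t1.
have := mul_ln_div_lt P0 t0 tP.
have := @mul_ln_div_le (1 - P) (1 - t); rewrite !subr_gt0 => /(_ P1 t1).
lra.
Qed.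

End Gibbs.

Section SumEquality.
Variable R : numDomainType.

Lemma ler_sum_eq (I : finType) (F G : I -> R) :
  (forall i, F i <= G i) -> \sum_i G i <= \sum_i F i -> forall i, F i = G i.
Proof.
move=> FG GF i; have GF_ge0 j : predT j -> 0 <= G j - F j by rewrite subr_ge0.
have sum0 : \sum_j (G j - F j) = 0.
  by apply/eqP; rewrite eq_le sumr_ge0 // andbT sumrB subr_le0.
by apply/eqP; rewrite eq_sym -subr_eq0; apply/eqP/(psumr_eq0P GF_ge0 sum0).
Qed.

Lemma ler_sum3_eq (I J K : finType) (F G : I -> J -> K -> R) :
  (forall i j k, F i j k <= G i j k) ->
  \sum_i \sum_j \sum_k G i j k <= \sum_i \sum_j \sum_k F i j k ->
  forall i j k, F i j k = G i j k.
Proof.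
move=> FG GF.
have FG2 i j : \sum_k F i j k <= \sum_k G i j k by exact: ler_sum.
have FG1 i : \sum_j \sum_k F i j k <= \sum_j \sum_k G i j k.
  by apply: ler_sum => j _.
have sum1 := ler_sum_eq FG1 GF.
have sum2 i : forall j, \sum_k F i j k = \sum_k G i j k.
  by apply: ler_sum_eq (FG2 i) _; rewrite sum1.
by move=> i j; apply: ler_sum_eq (FG i j) _; rewrite sum2.
Qed.

End SumEquality.

Section SysDPO.
Variables (R : realType) (X Y Z : finType) (rstar : X -> Z -> R) (beta : R).
Hypothesis beta_gt0 : 0 < beta.
Variable D' : X -> Y * Z -> Y * Z -> R.
Implicit Types (q : X -> Y * Z -> R) (x : X) (s : Y * Z).

Lemma BT_gt0_lt1 x (z z' : Z) : 0 < BT rstar x z z' < 1.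
Proof.
rewrite /BT; have ea := expR_gt0 (rstar x z); have eb := expR_gt0 (rstar x z').
by rewrite divr_gt0 ?addr_gt0 //= ltr_pdivrMr ?addr_gt0 // mul1r ltrDl.
Qed.

Lemma is_cond_distr_card_gt0 q x : is_cond_distr q -> (0 < #|{: Y * Z}|)%N.
Proof.
case=> _ /(_ x) sum1; rewrite lt0n; apply/negP => /eqP/card0_eq S0.
by move: sum1; rewrite big_pred0 // => /eqP; rewrite eq_sym oner_eq0.
Qed.

Definition dpo_score q x s := beta * ln (q x s / unif_ref R x s).

Lemma dpo_scoreB q x s s' : 0 < q x s -> 0 < q x s' ->
  dpo_score q x s - dpo_score q x s' = beta * (ln (q x s) - ln (q x s')).
Proof.
move=> qs qs'; have card_gt0 : (0 < #|{: Y * Z}|)%N by apply/card_gt0P; exists s.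
have unif_gt0 : 0 < unif_ref R x s by rewrite invr_gt0 ltr0n.
by rewrite /dpo_score !ln_div ?posrE //; ring.
Qed.

Definition sysdpo_term q x s s' :=
  D' x s s' * (Psys rstar x s s' * ln (sigmoid (dpo_score q x s - dpo_score q x s'))
     + (1 - Psys rstar x s s') * ln (sigmoid (dpo_score q x s' - dpo_score q x s))).

Lemma sysdpo_lossE q : (forall x s, 0 < q x s) ->
  sysdpo_loss rstar beta D' q =
  (- \sum_(x : X) \sum_(s : Y * Z) \sum_(s' : Y * Z) sysdpo_term q x s s')%:E.
Proof. by move=> q_gt0; rewrite /sysdpo_loss asboolT. Qed.

Lemma sysdpo_loss_gt0_of_le q q' : (forall x s, 0 < q' x s) ->
  (sysdpo_loss rstar beta D' q <= sysdpo_loss rstar beta D' q')%E ->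
  forall x s, 0 < q x s.
Proof.
move=> q'_gt0; rewrite [X in (_ <= X)%E]sysdpo_lossE // /sysdpo_loss.
by case: asboolP => // _; rewrite leye_eq.
Qed.

Lemma sysdpo_termE q x s s' : sysdpo_term q x s s' =
  D' x s s' * bernoulli_loglik (Psys rstar x s s')
                (sigmoid (dpo_score q x s - dpo_score q x s')).
Proof. by rewrite /sysdpo_term -[dpo_score q x s' - _]opprB sigmoidN. Qed.

Definition gibbs_normaliser x := \sum_(s : Y * Z) expR (rstar x s.2 / beta).

Definition gibbs_policy x s := expR (rstar x s.2 / beta) / gibbs_normaliser x.

Lemma gibbs_normaliser_gt0 x s : 0 < gibbs_normaliser x.
Proof.
rewrite /gibbs_normaliser (bigD1 s) //=.
by rewrite ltr_pwDl ?expR_gt0 ?sumr_ge0 // => s' _; rewrite expR_ge0.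
Qed.

Lemma gibbs_policy_gt0 x s : 0 < gibbs_policy x s.
Proof. by rewrite divr_gt0 ?expR_gt0 ?(gibbs_normaliser_gt0 x s). Qed.

Lemma is_cond_distr_gibbs_policy s0 : is_cond_distr gibbs_policy.
Proof.
split=> [x s|x]; first exact/ltW/gibbs_policy_gt0.
by rewrite /gibbs_policy -mulr_suml divff // lt0r_neq0 ?(gibbs_normaliser_gt0 x s0).
Qed.

Lemma sigmoid_score_gibbs_policy x s s' :
  sigmoid (dpo_score gibbs_policy x s - dpo_score gibbs_policy x s') =
  Psys rstar x s s'.
Proof.
rewrite dpo_scoreB ?gibbs_policy_gt0 // /gibbs_policy.
have N_gt0 := gibbs_normaliser_gt0 x s.
rewrite !ln_div ?posrE ?expR_gt0 // !expRK /Psys /BT -sigmoidB.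
by congr sigmoid; field; rewrite lt0r_neq0.
Qed.

Lemma sysdpo_term_le_gibbs_policy q x s s' : 0 <= D' x s s' ->
  sysdpo_term q x s s' <= sysdpo_term gibbs_policy x s s'.
Proof.
move=> D'_ge0; rewrite !sysdpo_termE sigmoid_score_gibbs_policy ler_wpM2l //.
by rewrite bernoulli_loglik_le ?BT_gt0_lt1 ?sigmoid_gt0 ?sigmoid_lt1.
Qed.

Lemma sysdpo_term_eq_gibbs_policy q x s s' : 0 < D' x s s' ->
  sysdpo_term q x s s' = sysdpo_term gibbs_policy x s s' ->
  dpo_score q x s - dpo_score q x s' = rstar x s.2 - rstar x s'.2.
Proof.
move=> D'_gt0; rewrite !sysdpo_termE sigmoid_score_gibbs_policy.
move=> /(mulfI (lt0r_neq0 D'_gt0)) /bernoulli_loglik_eq.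
rewrite BT_gt0_lt1 sigmoid_gt0 sigmoid_lt1 /Psys /BT -sigmoidB => /(_ isT isT).
exact: sigmoid_inj.
Qed.

Lemma sysdpo_minimizer_score q :
  (forall x s s', 0 < D' x s s') -> (forall x s, 0 < q x s) ->
  (sysdpo_loss rstar beta D' q <= sysdpo_loss rstar beta D' gibbs_policy)%E ->
  forall x s s', dpo_score q x s - dpo_score q x s' = rstar x s.2 - rstar x s'.2.
Proof.
move=> D'_gt0 q_gt0; rewrite !sysdpo_lossE //; last exact: gibbs_policy_gt0.
rewrite lee_fin lerN2.
move=> le_sum x s s'; apply: sysdpo_term_eq_gibbs_policy => //.
have term_le x' t t' : sysdpo_term q x' t t' <= sysdpo_term gibbs_policy x' t t'.
  exact/sysdpo_term_le_gibbs_policy/ltW.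
exact: ler_sum3_eq term_le le_sum x s s'.
Qed.

Lemma gibbs_form_of_score q x s0 : (forall s, 0 < q x s) ->
  (forall s, dpo_score q x s - dpo_score q x s0 = rstar x s.2 - rstar x s0.2) ->
  exists2 K, 0 < K & forall s, q x s = K * expR (rstar x s.2 / beta).
Proof.
move=> q_gt0 score; exists (expR (ln (q x s0) - rstar x s0.2 / beta)) => [|s].
  exact: expR_gt0.
have lnqE : ln (q x s) = ln (q x s0) - rstar x s0.2 / beta + rstar x s.2 / beta.
  have := score s; rewrite dpo_scoreB // => scoreE.
  have -> : rstar x s.2 = rstar x s0.2 + beta * (ln (q x s) - ln (q x s0)).
    by rewrite scoreE; ring.
  by field; rewrite lt0r_neq0.
by rewrite -expRD -lnqE lnK ?posrE.
Qed.

Lemma marginalZ_gibbs_form q x K :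
  (forall s, q x s = K * expR (rstar x s.2 / beta)) ->
  forall z, marginalZ q x z = K *+ #|Y| * expR (rstar x z / beta).
Proof.
by move=> qE z; rewrite /marginalZ (eq_bigr _ (fun y _ => qE (y, z))) /= sumr_const mulrnAl.
Qed.

Lemma BT_powR_gibbs_form x (m : Z -> R) c : 0 < c ->
  (forall z, m z = c * expR (rstar x z / beta)) ->
  forall zw zl, BT rstar x zw zl = m zw `^ beta / (m zw `^ beta + m zl `^ beta).
Proof.
move=> c_gt0 mE zw zl; have beta_neq0 := lt0r_neq0 beta_gt0.
rewrite !mE !powRM ?(ltW c_gt0) ?expR_ge0 // -!expRM !divfK // -mulrDr.
have cb_gt0 : 0 < c `^ beta by rewrite powR_gt0.
have ea := expR_gt0 (rstar x zw); have eb := expR_gt0 (rstar x zl).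
by rewrite /BT; field; rewrite !lt0r_neq0 ?addr_gt0.
Qed.

End SysDPO.

Theorem theorem1 (R : realType) (X Y Z : finType)
  (rstar : X -> Z -> R) (beta : R) (hbeta : 0 < beta)
  (Theta : Type) (p : Theta -> X -> Y * Z -> R)
  (hp : forall th, is_cond_distr (p th))
  (hfull : forall q : X -> Y * Z -> R,
      (forall x s, 0 < q x s) -> is_cond_distr q ->
      exists th, forall x s, p th x s = q x s)
  (D' : X -> Y * Z -> Y * Z -> R)
  (hD'pos : forall x s s', 0 < D' x s s')
  (hD'sum : \sum_(x : X) \sum_(s : Y * Z) \sum_(s' : Y * Z) D' x s s' = 1)
  (thstar : Theta)
  (hmin : forall th : Theta,
      (sysdpo_loss rstar beta D' (p thstar) <= sysdpo_loss rstar beta D' (p th))%E) :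
  forall (x : X) (zw zl : Z),
    BT rstar x zw zl =
      marginalZ (p thstar) x zw `^ beta /
        (marginalZ (p thstar) x zw `^ beta + marginalZ (p thstar) x zl `^ beta).
Proof.
move=> x zw zl.
have [s0 _] := card_gt0P (is_cond_distr_card_gt0 x (hp thstar)).
have [th p_th] := hfull _ (gibbs_policy_gt0 rstar beta)
                          (is_cond_distr_gibbs_policy rstar beta s0).
have p_thE : p th = gibbs_policy rstar beta.
  by apply/funext => x'; apply/funext => s; exact: p_th.
have min_gibbs := hmin th; rewrite p_thE in min_gibbs.
have star_gt0 := sysdpo_loss_gt0_of_le (gibbs_policy_gt0 rstar beta) min_gibbs.
have score := sysdpo_minimizer_score hbeta hD'pos star_gt0 min_gibbs.
have [K K_gt0 starE] := gibbs_form_of_score hbeta (star_gt0 x) (fun s => score x s s0).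
have mult_gt0 : 0 < K *+ #|Y| by rewrite pmulrn_lgt0 //; apply/card_gt0P; exists s0.1.
have margE := marginalZ_gibbs_form starE.
exact: (BT_powR_gibbs_form hbeta mult_gt0 margE).
Qed.
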